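(* Let $n$ be the least counterexample to Robin's inequality, i.e. the least integer $n>5040$ with $\sigma(n)\ge e^{\gamma} n\log\log n$ (assuming such an integer exists). Let $p_r$ denote the largest prime divisor of $n$. Then $\log n> p_r$.
   Context: $\sigma(n)=\sum_{d\mid n} d$ is the sum-of-divisors function, $\gamma$ is the Euler–Mascheroni constant, and $\log$ is the natural logarithm. Robin's inequality (RI) for an integer $n>5040$ is $\sigma(n)<e^{\gamma} n\log\log n$. *)

From Stdlib Require Import Reals.
From Coquelicot Require Import Coquelicot.
From mathcomp Require Import ssreflect ssrbool ssrnat seq prime bigop.

Definition euler_gamma : R :=
  real (Lim_seq (fun N : nat =>
    (sum_f_R0 (fun k => / INR (k + 1)) N - ln (INR (N + 1)))%R)).

Definition sigma (n : nat) : nat := (\sum_(d <- divisors n) d)%N.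

Definition RI (n : nat) : Prop :=
  (INR (sigma n) < exp euler_gamma * INR n * ln (ln (INR n)))%R.

(* Let p be a prime factor of n = p m and suppose ln n <= p.  As
   sigma (p m) <= (p + 1) sigma m, it suffices to show (p + 1) sigma m < e^gamma n ln ln n.
   If m > 5040, then m satisfies Robin's inequality by minimality, and
   p ln ln (p m) > (p + 1) ln ln m because p >= ln (p m).  If m <= 5040, then
   p >= ln 5041 > 8.5 forces p >= 11, and the inequality is checked by computation for
   each such m, with rational lower bounds for e^gamma (via H_63 - ln 64 <= gamma) and
   for ln ln certified by Taylor bounds for exp.  Nothing but the primality of p is used,
   so the conclusion holds for every prime factor of n. *)

From Pilot Require Import Defs.
From Stdlib Require Import Reals Lra QArith Qreals ZArith Lia.
From Coquelicot Require Import Rcomplements Rbar Lim_seq.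
From mathcomp Require Import ssreflect ssrbool ssrnat eqtype seq div prime bigop zify.
(* Re-imported so that [sigma] is [Defs.sigma], not the [sigma] of Stdlib's Reals. *)
Import Defs.

Open Scope nat_scope.

Lemma sigma_prime_mul_le p m : prime p -> 0 < m -> sigma (p * m) <= p.+1 * sigma m.
Proof.
move=> p_pr m_gt0; have pm_gt0 : 0 < p * m by rewrite muln_gt0 prime_gt0.
have -> : p.+1 * sigma m = \sum_(d <- divisors m ++ map (muln p) (divisors m)) d.
  by rewrite big_cat big_map -big_distrr mulSn.
apply: (sub_le_big_seq leqnn (fun a b => leq_addr b a)) => d.
rewrite count_uniq_mem ?divisors_uniq //.
case: (boolP (d \in divisors (p * m))) => //=; rewrite -dvdn_divisors // => d_dvd.
rewrite -has_count has_pred1 mem_cat -dvdn_divisors //.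
apply/orP; have [[k d_eq] | pNd] := altP (@dvdnP p d).
  right; rewrite d_eq mulnC (map_f (muln p)) // -dvdn_divisors //.
  by rewrite -(dvdn_pmul2l (prime_gt0 p_pr)) mulnC -d_eq.
left; have d_coprime : coprime d p by rewrite coprime_sym prime_coprime.
by rewrite -(Gauss_dvdr _ d_coprime).
Qed.

Lemma prime_gt8_ge11 p : prime p -> 8 < p -> 11 <= p.
Proof.
move=> p_pr p_gt8; case: (leqP 11 p) => // p_lt.
have : (p == 9) || (p == 10) by lia.
by case/orP => /eqP p_eq; move: p_pr; rewrite p_eq.
Qed.

Open Scope R_scope.

Lemma INR_addn m n : INR (m + n) = INR m + INR n.
Proof. exact: plus_INR. Qed.

Lemma INR_muln m n : INR (m * n) = INR m * INR n.
Proof. by rewrite -multE mult_INR. Qed.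

Lemma INR_2 : INR 2 = 2.
Proof. by rewrite /=; lra. Qed.

Lemma ln_le_sub1 x : 0 < x -> ln x <= x - 1.
Proof. by move=> x0; have := exp_ineq1_le (ln x); rewrite exp_ln //; lra. Qed.

Lemma le_ln_of_exp_le a x : exp a <= x -> a <= ln x.
Proof.
by move=> ax; rewrite -[a]ln_exp; apply: ln_le => //; apply: exp_pos.
Qed.

Lemma exp_le_compat x y : x <= y -> exp x <= exp y.
Proof. by case=> [xy | ->]; [apply/Rlt_le/exp_increasing | apply: Rle_refl]. Qed.

Lemma loglog_ge_of_exp_le l u X : exp l <= u -> exp u <= X -> l <= ln (ln X).
Proof. by move=> lu uX; apply/le_ln_of_exp_le/(Rle_trans _ _ _ lu)/le_ln_of_exp_le. Qed.

Lemma loglog_mul_gt p x : 1 < p -> 1 < x -> ln (p * x) <= p ->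
  (p + 1) * ln (ln x) < p * ln (ln (p * x)).
Proof.
move=> p1 x1; rewrite ln_mult; [|lra|lra] => Lp.
have l0 : 0 < ln x by rewrite -ln_1; apply: ln_increasing; lra.
have lnp0 : 0 < ln p by rewrite -ln_1; apply: ln_increasing; lra.
set l := ln x in l0 Lp *.
(* With L = ln p + l: ln L - ln l >= (L - l) / L = ln p / L, and p / L >= 1. *)
have gap : ln p / (ln p + l) <= ln (ln p + l) - ln l.
  have := ln_le_sub1 (l / (ln p + l)) (Rdiv_lt_0_compat l (ln p + l) l0 ltac:(lra)).
  have -> : l / (ln p + l) - 1 = - (ln p / (ln p + l)) by field; lra.
  rewrite ln_div; lra.
have lnl_lt : ln l < ln p by apply: ln_increasing; lra.
have lnp_le : ln p <= p * (ln p / (ln p + l)).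
  have -> : p * (ln p / (ln p + l)) = ln p + ln p * ((p - (ln p + l)) / (ln p + l)).
    by field; lra.
  have : 0 <= ln p * ((p - (ln p + l)) / (ln p + l)).
    apply: Rmult_le_pos; first lra.
    by apply: Rmult_le_pos; [lra | apply/Rlt_le/Rinv_0_lt_compat; lra].
  lra.
have := Rmult_le_compat_l p _ _ (ltac:(lra) : 0 <= p) gap; lra.
Qed.

Lemma large_cofactor_bound p m : (1 < p)%N -> (1 < m)%N -> RI m -> ln (INR (p * m)) <= INR p ->
  INR (p.+1 * sigma m) < exp euler_gamma * INR (p * m) * ln (ln (INR (p * m))).
Proof.
move=> /ltP/lt_INR p_gt1 /ltP/lt_INR m_gt1 RIm; rewrite !INR_muln S_INR => Lp.
rewrite INR_1 in p_gt1 m_gt1.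
have Em0 : 0 < exp euler_gamma * INR m by apply: Rmult_lt_0_compat; [apply: exp_pos | lra].
have := Rmult_lt_compat_l _ _ _ Em0 (loglog_mul_gt _ _ p_gt1 m_gt1 Lp).
have := Rmult_lt_compat_l (INR p + 1) _ _ ltac:(lra) RIm.
lra.
Qed.

(* [harmonic n] is H_(n+1), as indexed in [euler_gamma]. *)
Definition harmonic (n : nat) : R := sum_f_R0 (fun k => / INR (k + 1)) n.

Definition gamma_seq (n : nat) : R := harmonic n - ln (INR (n + 1)).

Definition gamma_seq_lo (n : nat) : R := harmonic n - ln (INR (n + 2)).

Lemma euler_gammaE : euler_gamma = real (Lim_seq gamma_seq).
Proof. by []. Qed.

Lemma harmonicS n : harmonic n.+1 = harmonic n + / (INR n + 2).
Proof.
have -> : harmonic n.+1 = harmonic n + / INR (n.+1 + 1) by [].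
by rewrite INR_addn S_INR /=; do 2 f_equal; lra.
Qed.

Lemma ln_succ_sub_le y : 0 < y -> ln (y + 1) - ln y <= / y.
Proof.
move=> y0; rewrite -ln_div; [|lra|lra].
have := ln_le_sub1 ((y + 1) / y) (Rdiv_lt_0_compat (y + 1) y ltac:(lra) y0).
by have -> : (y + 1) / y - 1 = / y by field; lra.
Qed.

Lemma ln_succ_sub_ge y : 0 < y -> / (y + 1) <= ln (y + 1) - ln y.
Proof.
move=> y0; have := ln_le_sub1 (y / (y + 1)) (Rdiv_lt_0_compat y (y + 1) y0 ltac:(lra)).
rewrite ln_div; [|lra|lra].
have -> : y / (y + 1) - 1 = - / (y + 1) by field; lra.
lra.
Qed.

Lemma gamma_seq_le1 n : gamma_seq n <= 1.
Proof.
elim: n => [|n IH]; first by rewrite /gamma_seq /harmonic /= ln_1; lra.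
apply: Rle_trans IH; rewrite /gamma_seq harmonicS !INR_addn (S_INR n) INR_1.
have := ln_succ_sub_ge (INR n + 1) ltac:(have := pos_INR n; lra).
have -> : INR n + 1 + 1 = INR n + 2 by ring.
lra.
Qed.

Lemma gamma_seq_lo_le n : gamma_seq_lo n <= gamma_seq n.
Proof.
rewrite /gamma_seq /gamma_seq_lo !INR_addn INR_1 INR_2; have := pos_INR n => n0.
have : ln (INR n + 1) <= ln (INR n + 2) by apply: ln_le; lra.
lra.
Qed.

Lemma gamma_seq_lo_incr n : gamma_seq_lo n <= gamma_seq_lo n.+1.
Proof.
rewrite /gamma_seq_lo harmonicS !INR_addn (S_INR n) INR_2; have := pos_INR n => n0.
have := ln_succ_sub_le (INR n + 2) ltac:(lra).
have -> : INR n + 2 + 1 = INR n + 1 + 2 by ring.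
lra.
Qed.

Lemma gamma_seq_lo_le_euler_gamma k : gamma_seq_lo k <= euler_gamma.
Proof.
have lo : Rbar_le (gamma_seq_lo k) (Lim_seq gamma_seq).
  rewrite -Lim_seq_const; apply: Lim_seq_le_loc; exists k => n /leP kn.
  apply: Rle_trans (gamma_seq_lo_le n).
  rewrite -(subnKC kn); elim: (n - k)%N => [|d IH]; first by rewrite addn0; lra.
  by apply: Rle_trans IH _; rewrite addnS; apply: gamma_seq_lo_incr.
have hi : Rbar_le (Lim_seq gamma_seq) 1.
  rewrite -Lim_seq_const; apply: Lim_seq_le_loc; exists 0%N => n _.
  exact: gamma_seq_le1.
by rewrite euler_gammaE; move: lo hi; case: (Lim_seq gamma_seq).
Qed.

Lemma harmonic_62_ge : 4.7282 <= harmonic 62.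
Proof.
rewrite /harmonic; cbn [sum_f_R0]; rewrite !INR_IZR_INZ -!plusE.
cbn -[IZR Rinv Rplus]; lra.
Qed.

Definition exp_taylor (x : R) (d : nat) : R :=
  sum_f_R0 (fun i => / INR (fact i) * x ^ i) d.

Lemma exp_taylor_cv x : Un_cv (exp_taylor x) (exp x).
Proof. by rewrite /exp; case: (exist_exp x). Qed.

Lemma exp_taylor_term_ge0 x i : 0 <= x -> 0 <= / INR (fact i) * x ^ i.
Proof.
move=> x0; apply: Rmult_le_pos; last exact: pow_le.
by apply/Rlt_le/Rinv_0_lt_compat/INR_fact_lt_0.
Qed.

Lemma exp_taylor_ge0 x d : 0 <= x -> 0 <= exp_taylor x d.
Proof. by move=> x0; apply: cond_pos_sum => i; apply: exp_taylor_term_ge0. Qed.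

Lemma exp_taylor_le x d : 0 <= x -> exp_taylor x d <= exp x.
Proof.
move=> x0; apply: growing_ineq (exp_taylor_cv x) d => k.
have := exp_taylor_term_ge0 x k.+1 x0; rewrite /exp_taylor /=; lra.
Qed.

(* The terms x ^ i / i! decrease when x <= 1, so the odd partial sums of this alternating
   series stay below its limit. *)
Lemma exp_opp_taylor_le x d : 0 <= x <= 1 -> exp_taylor (- x) (2 * d).+1 <= exp (- x).
Proof.
move=> x01; set u := fun i => x ^ i / INR (fact i).
have Eu k : exp_taylor (- x) k = sum_f_R0 (tg_alt u) k.
  apply: PartSum.sum_eq => i _; rewrite /tg_alt /u.
  have -> : - x = -1 * x by ring.
  by rewrite Rpow_mult_distr /Rdiv; ring.
have u_dec : Un_decreasing u.
  move=> k; rewrite /u; change (fact k.+1) with (k.+1 * fact k)%coq_nat.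
  rewrite mult_INR /Rdiv Rinv_mult -tech_pow_Rmult.
  have t0 := exp_taylor_term_ge0 x k (proj1 x01).
  have r1 : x * / INR k.+1 <= 1.
    have k1 : 1 <= INR k.+1 by apply: (le_INR 1); apply/leP.
    apply: (Rmult_le_reg_r (INR k.+1)); first lra.
    rewrite Rmult_assoc Rinv_l; lra.
  have := Rmult_le_compat_r _ _ _ t0 r1; lra.
have u_cv : Un_cv (fun k => sum_f_R0 (tg_alt u) k) (exp (- x)).
  move=> eps /(exp_taylor_cv (- x)) [N HN]; exists N => k /HN.
  by rewrite Eu.
rewrite Eu; exact: (proj1 (alternated_series_ineq u _ d u_dec (cv_speed_pow_fact x) u_cv)).
Qed.

Lemma exp_mul_INR (k : nat) x : exp (INR k * x) = exp x ^ k.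
Proof.
elim: k => [|k IH]; first by rewrite Rmult_0_l exp_0.
by rewrite S_INR Rmult_plus_distr_r Rmult_1_l exp_plus IH /= Rmult_comm.
Qed.

Lemma exp_ge_taylor_pow x N d : 0 <= x -> (0 < N)%N ->
  exp_taylor (x / INR N) d ^ N <= exp x.
Proof.
move=> x0 N0; have N0' : 0 < INR N by apply: lt_0_INR; apply/ltP.
have y0 : 0 <= x / INR N by apply: Rmult_le_pos => //; apply/Rlt_le/Rinv_0_lt_compat.
have -> : exp x = exp (x / INR N) ^ N by rewrite -exp_mul_INR; congr exp; field; lra.
by apply: pow_incr; split; [apply: exp_taylor_ge0 | apply: exp_taylor_le].
Qed.

Lemma exp_le_of_taylor_pow x N d c : 0 <= x <= INR N -> (0 < N)%N ->
  let a := exp_taylor (- (x / INR N)) (2 * d).+1 in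
  0 <= a -> 1 <= c * a ^ N -> exp x <= c.
Proof.
move=> x0N N0 a a0 ca; have N0' : 0 < INR N by apply: lt_0_INR; apply/ltP.
have y01 : 0 <= x / INR N <= 1.
  split; first by apply: Rmult_le_pos; [lra | apply/Rlt_le/Rinv_0_lt_compat].
  apply: (Rmult_le_reg_r (INR N)) => //; rewrite /Rdiv Rmult_assoc Rinv_l; lra.
have aN : a ^ N <= exp (- x).
  have -> : exp (- x) = exp (- (x / INR N)) ^ N by rewrite -exp_mul_INR; congr exp; field; lra.
  by apply: pow_incr; split; [|apply: exp_opp_taylor_le].
have aN0 := pow_le a N a0.
have c0 : 0 < c by nra.
have c_exp : 1 <= c * exp (- x) by nra.
rewrite -[exp x]Rmult_1_r; apply: Rle_trans (Rmult_le_compat_l _ _ _ (Rlt_le _ _ (exp_pos x)) c_exp) _.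
by rewrite Rmult_comm Rmult_assoc -exp_plus Rplus_opp_l exp_0; lra.
Qed.

Fixpoint Qpow (q : Q) (n : nat) : Q := if n is k.+1 then (q * Qpow q k)%Q else 1%Q.

Fixpoint Qexp_term (y : Q) (i : nat) : Q :=
  if i is k.+1 then (Qexp_term y k * y * (1 # Pos.of_succ_nat k))%Q else 1%Q.

Fixpoint Qexp_taylor (y : Q) (d : nat) : Q :=
  if d is k.+1 then (Qexp_taylor y k + Qexp_term y d)%Q else 1%Q.

Lemma Q2R_inject_Z z : Q2R (inject_Z z) = IZR z.
Proof. by rewrite /Q2R /= Rinv_1 Rmult_1_r. Qed.

Lemma Q2R_pow q n : Q2R (Qpow q n) = Q2R q ^ n.
Proof. by elim: n => [|n IH] /=; rewrite ?(Q2R_inject_Z 1) ?Q2R_mult ?IH. Qed.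

Lemma Q2R_exp_term y i : Q2R (Qexp_term y i) = / INR (fact i) * Q2R y ^ i.
Proof.
elim: i => [|i IH]; first by rewrite /= (Q2R_inject_Z 1); field.
have inv_succ : Q2R (1 # Pos.of_succ_nat i) = / INR i.+1.
  rewrite /Q2R; cbn [Qnum Qden].
  by rewrite Zpos_P_of_succ_nat -Nat2Z.inj_succ -INR_IZR_INZ Rmult_1_l.
change (Qexp_term y i.+1) with (Qexp_term y i * y * (1 # Pos.of_succ_nat i))%Q.
rewrite !Q2R_mult IH inv_succ; change (fact i.+1) with (i.+1 * fact i)%coq_nat.
rewrite mult_INR -tech_pow_Rmult; field.
by split; [apply: INR_fact_neq_0 | apply: not_0_INR].
Qed.

Lemma Q2R_exp_taylor y d : Q2R (Qexp_taylor y d) = exp_taylor (Q2R y) d.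
Proof.
elim: d => [|d IH]; first by rewrite /= (Q2R_inject_Z 1) /exp_taylor /=; field.
change (Qexp_taylor y d.+1) with (Qexp_taylor y d + Qexp_term y d.+1)%Q.
by rewrite Q2R_plus IH Q2R_exp_term.
Qed.

Lemma Q2R_le_of_bool x y : Qle_bool x y -> Q2R x <= Q2R y.
Proof. by move/Qle_bool_imp_le/Qle_Rle. Qed.

Lemma Q2R_lt_of_not_le_bool x y : ~~ Qle_bool y x -> Q2R x < Q2R y.
Proof. by move/negP=> yx; apply/Qlt_Rlt/Qnot_le_lt => /Qle_bool_iff. Qed.

Lemma Q2R_div16 x : Q2R (x * (1 # 16)) = Q2R x / INR 16.
Proof. by rewrite Q2R_mult /Q2R /= /Rdiv; field. Qed.

(* exp x = exp (x / 16) ^ 16, and exp (x / 16) is bounded below by its Taylor sum of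
   degree 7 and above by the inverse of the (alternating) Taylor sum of exp (- x / 16);
   both bounds are then compared with c in exact rational arithmetic. *)
Definition exp_ge_check (x c : Q) : bool :=
  Qle_bool 0 x && Qle_bool c (Qpow (Qred (Qexp_taylor (x * (1 # 16)) 7)) 16).

Definition exp_le_check (x c : Q) : bool :=
  let a := Qred (Qexp_taylor (- (x * (1 # 16))) 7) in
  [&& Qle_bool 0 x, Qle_bool x 16, Qle_bool 0 a & Qle_bool 1 (c * Qpow a 16)].

Lemma exp_ge_check_sound x c : exp_ge_check x c -> Q2R c <= exp (Q2R x).
Proof.
case/andP=> /Q2R_le_of_bool x0 /Q2R_le_of_bool.
rewrite Q2R_pow (Qeq_eqR _ _ (Qred_correct _)) Q2R_exp_taylor Q2R_div16 => cle.
apply: Rle_trans cle (exp_ge_taylor_pow _ _ _ _ _) => //.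
by rewrite (Q2R_inject_Z 0) in x0.
Qed.

Lemma exp_le_check_sound x c : exp_le_check x c -> exp (Q2R x) <= Q2R c.
Proof.
case/and4P=> /Q2R_le_of_bool x0 /Q2R_le_of_bool xN /Q2R_le_of_bool a0 /Q2R_le_of_bool.
rewrite (Q2R_inject_Z 0) in x0 a0; rewrite (Q2R_inject_Z 1) (Q2R_inject_Z 16) in xN *.
rewrite Q2R_mult Q2R_pow.
rewrite (Qeq_eqR _ _ (Qred_correct _)) Q2R_exp_taylor Q2R_opp Q2R_div16 in a0 *.
apply: (exp_le_of_taylor_pow _ 16 3) => //.
by rewrite INR_IZR_INZ.
Qed.

(* e^gamma >= e^(H_63) / 64 >= e^4.7282 / 64 >= 112.96 / 64 = 1.765. *)
Definition exp_gamma_lb : Q := 1765 # 1000.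

Lemma exp_gamma_lb_le : Q2R exp_gamma_lb <= exp euler_gamma.
Proof.
have g := gamma_seq_lo_le_euler_gamma 62.
have E : 112.96 <= exp 4.7282 by apply: (exp_ge_check_sound (47282 # 10000)); vm_compute.
have H := exp_le_compat _ _ harmonic_62_ge.
rewrite /gamma_seq_lo (_ : INR (62 + 2) = 64) in g; last by rewrite /=; lra.
apply: Rle_trans (exp_le_compat _ _ g).
rewrite exp_plus exp_Ropp exp_ln /exp_gamma_lb /Q2R /=; lra.
Qed.

Lemma ln_ge_of_ge_5041 x : 5041 <= x -> 8.52 <= ln x.
Proof.
move=> x_ge; apply: le_ln_of_exp_le; apply: Rle_trans x_ge.
by have := exp_le_check_sound (852 # 100) (inject_Z 5041); rewrite Q2R_inject_Z; apply; vm_compute.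
Qed.

Lemma loglog_ge_of_checks (l u : Q) (T x : Z) X :
  exp_le_check l u -> exp_le_check u (inject_Z T) -> (T <= x)%Z -> IZR x <= X ->
  Q2R l <= ln (ln X).
Proof.
move=> /exp_le_check_sound lu /exp_le_check_sound; rewrite Q2R_inject_Z => uT /IZR_le Tx xX.
by apply: (loglog_ge_of_exp_le _ _ _ lu); apply: Rle_trans uT (Rle_trans _ _ _ Tx xX).
Qed.

(* The thresholds are 11 m for the most abundant m <= 5040 (m = 840, 2520, 5040); each level
   l is certified through an intermediate u with exp l <= u and exp u <= threshold. *)
Definition loglog_lb (x : Z) : Q :=
  if (55440 <=? x)%Z then 239 # 100 else
  if (27720 <=? x)%Z then 2324 # 1000 else
  if (9240 <=? x)%Z then 2211 # 1000 else 2142 # 1000.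

Lemma loglog_lb_le (x : Z) X : (5041 <= x)%Z -> IZR x <= X -> Q2R (loglog_lb x) <= ln (ln X).
Proof.
move=> x_ge xX; rewrite /loglog_lb.
case: Z.leb_spec => ?; first by apply: (loglog_ge_of_checks _ (1092 # 100) 55440 x) => //; vm_compute.
case: Z.leb_spec => ?; first by apply: (loglog_ge_of_checks _ (1022 # 100) 27720 x) => //; vm_compute.
case: Z.leb_spec => ?; first by apply: (loglog_ge_of_checks _ (913 # 100) 9240 x) => //; vm_compute.
by apply: (loglog_ge_of_checks _ (852 # 100) 5041 x) => //; vm_compute.
Qed.

Lemma succ_mul_lt_mono s a q p : 0 <= s -> 0 < q <= p ->
  (q + 1) * s < a * q -> (p + 1) * s < a * p.
Proof. move=> s0 qp lt_q; nra. Qed.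

(* [q] is the least [p >= 11] with [p * m > 5040]; the bound then holds for every larger [p],
   since [(p + 1) / p] decreases and [ln (ln (p * m))] increases with [p]. *)
Definition small_cofactor_check (m : nat) : bool :=
  let zm := Z.of_nat m in
  let q := Z.max 11 (5040 / zm + 1) in
  ~~ Qle_bool (exp_gamma_lb * loglog_lb (zm * q) * inject_Z (zm * q))
              (inject_Z ((q + 1) * Z.of_nat (sumn (divisors m)))).

Lemma small_cofactor_checked : all small_cofactor_check (iota 1 5040).
Proof. by vm_compute. Qed.

Lemma small_cofactor_bound p m : (0 < m <= 5040)%N -> (11 <= p)%N -> (5040 < p * m)%N ->
  INR (p.+1 * sigma m) < exp euler_gamma * INR (p * m) * ln (ln (INR (p * m))).
Proof.
move=> /andP[m_gt0 m_le] p_ge pm_gt.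
have := allP small_cofactor_checked m; rewrite mem_iota m_gt0 add1n ltnS => /(_ m_le).
rewrite /small_cofactor_check; set zm := Z.of_nat m; set q := Z.max _ _.
move=> /Q2R_lt_of_not_le_bool; rewrite !Q2R_mult !Q2R_inject_Z !mult_IZR plus_IZR.
have n5040 : Z.of_nat 5040 = 5040%Z by [].
have zm_gt0 : (0 < zm)%Z by rewrite /zm; lia.
have q_le : (q <= Z.of_nat p)%Z.
  suff : (5040 / zm < Z.of_nat p)%Z by rewrite /q; lia.
  by apply: Z.div_lt_upper_bound => //; rewrite /zm; nia.
have mq_gt : (5040 < zm * q)%Z.
  by have := Z.mul_succ_div_gt 5040 zm zm_gt0; rewrite /q; nia.
have mq_le : IZR (zm * q) <= INR (p * m).
  by rewrite INR_IZR_INZ; apply: IZR_le; rewrite /zm; nia.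
have L := loglog_lb_le (zm * q) _ ltac:(lia) mq_le.
have L0 : 0 <= Q2R (loglog_lb (zm * q)).
  by rewrite /loglog_lb; repeat case: ifP => _; rewrite /Q2R /=; lra.
have E := exp_gamma_lb_le.
have c0 : 0 < Q2R exp_gamma_lb by rewrite /Q2R /=; lra.
have qp : 0 < IZR q <= INR p.
  by rewrite INR_IZR_INZ; split; apply: IZR_lt || apply: IZR_le; lia.
have -> : IZR zm = INR m by rewrite INR_IZR_INZ.
rewrite -INR_IZR_INZ sumnE -/(sigma m) => chk.
rewrite INR_muln S_INR INR_muln; rewrite INR_muln in L.
apply: Rlt_le_trans
  (succ_mul_lt_mono _ (Q2R exp_gamma_lb * Q2R (loglog_lb (zm * q)) * INR m) _ _ (pos_INR _) qp _) _.
  lra.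
have cL := Rmult_le_compat _ _ _ _ (Rlt_le _ _ c0) L0 E L.
have := Rmult_le_compat_r _ _ _ (Rmult_le_pos _ _ (pos_INR m) (pos_INR p)) cL.
lra.
Qed.

Lemma least_counterexample_prime_lt_ln n p : (5040 < n)%N -> ~ RI n ->
  (forall m, (5040 < m)%N -> (m < n)%N -> RI m) -> prime p -> (p %| n)%N ->
  INR p < ln (INR n).
Proof.
move=> n_gt nRI minRI p_pr p_dvd; apply: Rnot_le_lt => ln_le_p.
have p_gt1 := prime_gt1 p_pr.
set m := (n %/ p)%N; have n_eq : n = (p * m)%N by rewrite /m mulnC divnK.
have m_gt0 : (0 < m)%N by move: n_gt; rewrite n_eq; case: (m) => //; rewrite muln0.
have key : INR (p.+1 * sigma m) < exp euler_gamma * INR n * ln (ln (INR n)).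
  rewrite n_eq in ln_le_p *; case: (ltnP 5040 m) => [m_gt | m_le].
    apply: large_cofactor_bound => //; first exact: leq_trans m_gt.
    apply: minRI => //; rewrite n_eq -[X in (X < _)%N]mul1n ltn_mul2r m_gt0.
    exact: p_gt1.
  apply: small_cofactor_bound; [by rewrite m_gt0 | | by rewrite -n_eq].
  apply: prime_gt8_ge11 => //; apply/ltP/INR_lt; rewrite (_ : INR 8 = 8); last by rewrite /=; lra.
  suff : 8.52 <= ln (INR (p * m)) by lra.
  apply: ln_ge_of_ge_5041; rewrite -n_eq INR_IZR_INZ; apply: IZR_le.
  have n5040 : Z.of_nat 5040 = 5040%Z by []; lia.
apply: nRI; apply: Rle_lt_trans key; apply: le_INR; apply/leP.
by rewrite n_eq; apply: sigma_prime_mul_le.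
Qed.

Theorem theorem1 (n : nat) :
  (5040 < n)%N -> ~ RI n ->
  (forall m : nat, (5040 < m)%N -> (m < n)%N -> RI m) ->
  (INR (max_pdiv n) < ln (INR n))%R.
Proof.
move=> n_gt nRI minRI; have n_gt1 : (1 < n)%N by apply: leq_trans n_gt.
by apply: least_counterexample_prime_lt_ln; rewrite ?max_pdiv_prime ?max_pdiv_dvd.
Qed.
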